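(* Let $\varphi$ be the endomorphism of the free group $F_2$ on $\{a,b\}$ defined by $a\varphi=a^2$ and $b\varphi=a^2b^2a^{-2}$. Then $\varphi$ is an almost strictly length-increasing monomorphism of $F_2$ which is not length-increasing.
   Context: Elements of a free group are identified with reduced words and $|u|$ is the length of the reduced word $u$; maps are written on the right. An endomorphism $\varphi$ of $F_n$ is length-increasing if $|u\varphi|\geq|u|$ for all $u\in F_n$, and almost strictly length-increasing if $|u\varphi|\leq|u|$ for only finitely many $u\in F_n$. *)

(* (seq). Free group F_2 on {a, b} modelled as reduced words. *)
From mathcomp Require Import all_boot.
Set Implicit Arguments. Unset Strict Implicit. Unset Printing Implicit Defensive.

(* A letter is (generator, exponent sign): generator false = a, true = b;
   sign true = +1, false = -1. *)
Definition letter := (bool * bool)%type.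
Definition a_ : letter := (false, true).
Definition A_ : letter := (false, false).
Definition b_ : letter := (true, true).
Definition B_ : letter := (true, false).

Definition inv_letter (x : letter) : letter := (x.1, ~~ x.2).

Definition reduced (w : seq letter) : bool :=
  sorted (fun x y => y != inv_letter x) w.

Definition push (x : letter) (w : seq letter) : seq letter :=
  match w with
  | y :: w' => if y == inv_letter x then w' else x :: w
  | [::] => [:: x]
  end.
Definition reduce (w : seq letter) : seq letter := foldr push [::] w.

Definition inv_word (w : seq letter) : seq letter := rev (map inv_letter w).

Definition wlen (u : seq letter) : nat := size u.

Definition img_letter (ia ib : seq letter) (x : letter) : seq letter :=
  let g := if x.1 then ib else ia in if x.2 then g else inv_word g.
Definition endo (ia ib : seq letter) (u : seq letter) : seq letter :=
  reduce (flatten (map (img_letter ia ib) u)).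

Definition phi : seq letter -> seq letter :=
  endo [:: a_; a_] [:: a_; a_; b_; b_; A_; A_].

Definition mono_on_F2 (f : seq letter -> seq letter) : Prop :=
  forall u v, reduced u -> reduced v -> f u = f v -> u = v.

Definition length_increasing (f : seq letter -> seq letter) : Prop :=
  forall u, reduced u -> wlen u <= wlen (f u).

(* |u f| <= |u| for only finitely many u in F_2. *)
Definition almost_strictly_length_increasing (f : seq letter -> seq letter) : Prop :=
  exists s : seq (seq letter),
    forall u, reduced u -> wlen (f u) <= wlen u -> u \in s.

(* Writing δ for the endomorphism a ↦ a², b ↦ b², we have uφ = a² (uδ) a⁻² for
   every u.  Since δ maps reduced words to reduced words by doubling every
   letter, |uδ| = 2|u|, hence 2|u| ≤ |uφ| + 4: φ is injective, and |uφ| ≤ |u|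
   forces |u| ≤ 4.  On the other hand (a⁻¹ b a)φ = b², which is shorter. *)
From mathcomp Require Import all_boot.
From mathcomp Require Import zify.
Set Implicit Arguments. Unset Strict Implicit.

Lemma inv_letterK : involutive inv_letter.
Proof. by case=> [[] []]. Qed.

Lemma reduced_cons2 x y w :
  reduced [:: x, y & w] = (y != inv_letter x) && reduced (y :: w).
Proof. by []. Qed.

Lemma reduced_behead x w : reduced (x :: w) -> reduced w.
Proof. by case: w => // y w /andP[]. Qed.

Lemma push_reduced x w : reduced w -> reduced (push x w).
Proof.
case: w => [|y w] //= Hw; case: eqP => [_|ne]; first exact: reduced_behead Hw.
rewrite reduced_cons2; apply/andP; split=> //.
by apply/eqP=> E; apply: ne; rewrite E.
Qed.

Lemma pushK x w : reduced w -> push (inv_letter x) (push x w) = w.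
Proof.
case: w => [|y w] Hw /=; first by rewrite inv_letterK eqxx.
case: (eqVneq y (inv_letter x)) => [<-|_]; last by rewrite /= inv_letterK eqxx.
by case: w Hw => [|z w] //= /andP[/negbTE->].
Qed.

(* [pushs w Z] is the reduced form of [w ++ Z]; for reduced [Z] it is the
   product w·Z in F_2, and [reduce w = pushs w [::]]. *)
Definition pushs (w Z : seq letter) : seq letter := foldr push Z w.

Lemma pushs_reduced w Z : reduced Z -> reduced (pushs w Z).
Proof. by move=> HZ; elim: w => //= x w; apply: push_reduced. Qed.

Lemma pushs_cat w1 w2 Z : pushs (w1 ++ w2) Z = pushs w1 (pushs w2 Z).
Proof. exact: foldr_cat. Qed.

Lemma pushs_rcons w x Z : pushs (rcons w x) Z = pushs w (push x Z).
Proof. by rewrite -cats1 pushs_cat. Qed.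

Lemma push_pushs x r Z : reduced Z -> reduced r ->
  push x (pushs r Z) = pushs (push x r) Z.
Proof.
move=> HZ; case: r => [|y r] //= _; case: eqP => [->|//].
by rewrite -{1}[x]inv_letterK pushK ?pushs_reduced.
Qed.

Lemma pushs_reduce w Z : reduced Z -> pushs w Z = pushs (reduce w) Z.
Proof.
by move=> HZ; elim: w => //= x w ->; rewrite push_pushs // pushs_reduced.
Qed.

Lemma reduce_id w : reduced w -> reduce w = w.
Proof.
elim: w => //= x w IH Hw; rewrite IH ?(reduced_behead Hw) //.
by case: w Hw {IH} => // y w /= /andP[/negbTE->].
Qed.

Lemma pushsA u v w : reduced v -> reduced w ->
  pushs (pushs u v) w = pushs u (pushs v w).
Proof.
move=> Hv Hw; rewrite -pushs_cat (pushs_reduce (u ++ v)) //.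
by rewrite /reduce foldr_cat -/(reduce v) reduce_id.
Qed.

Lemma pushsK w Z : reduced Z -> pushs (inv_word w) (pushs w Z) = Z.
Proof.
elim: w => //= x w IH HZ.
rewrite /inv_word /= rev_cons pushs_rcons pushK ?pushs_reduced //; exact: IH.
Qed.

Lemma inv_wordK : involutive inv_word.
Proof. by move=> w; rewrite /inv_word map_rev revK (mapK inv_letterK). Qed.

Lemma pushsVK w Z : reduced Z -> pushs w (pushs (inv_word w) Z) = Z.
Proof. by move=> HZ; rewrite -{1}(inv_wordK w) pushsK. Qed.

Lemma size_pushs w Z : size (pushs w Z) <= size w + size Z.
Proof.
elim: w => //= x w IH; rewrite addSn.
apply: leq_trans (_ : _ <= (size (pushs w Z)).+1) _; last by [].
by case: (pushs w Z) => //= y s; case: eqP => //= _; rewrite leqW.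
Qed.

(* The word of uδ. *)
Fixpoint sq_letters (u : seq letter) : seq letter :=
  if u is x :: u' then x :: x :: sq_letters u' else [::].

Lemma size_sq_letters u : size (sq_letters u) = (size u).*2.
Proof. by elim: u => //= x u ->; rewrite doubleS. Qed.

Lemma sq_letters_reduced u : reduced u -> reduced (sq_letters u).
Proof.
have nx (x : letter) : x != inv_letter x by case: x => [[] []].
elim: u => // x [|y u] IH Hu; first by rewrite /= nx.
move: (Hu); rewrite reduced_cons2 => /andP[ne Hyu].
change ((x != inv_letter x) && ((y != inv_letter x) && reduced (sq_letters (y :: u)))).
by rewrite nx ne IH.
Qed.

Lemma sq_letters_inj : injective sq_letters.
Proof. by elim=> [|x u IH] [|y v] //= [-> E] /IH->. Qed.

Definition a2 : seq letter := [:: a_; a_].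

Lemma phi_letter x Z : reduced Z ->
  pushs (img_letter [:: a_; a_] [:: a_; a_; b_; b_; A_; A_] x) Z =
  pushs (a2 ++ [:: x; x] ++ inv_word a2) Z.
Proof. by move=> HZ; rewrite pushs_reduce // [RHS]pushs_reduce //; case: x => [[] []]. Qed.

Lemma pushs_phi_word u Z : reduced Z ->
  pushs (flatten (map (img_letter [:: a_; a_] [:: a_; a_; b_; b_; A_; A_]) u)) Z =
  pushs a2 (pushs (sq_letters u) (pushs (inv_word a2) Z)).
Proof.
move=> HZ; elim: u => [|x u IH]; first by rewrite [pushs [::] _]/= pushsVK.
rewrite [flatten _]/= pushs_cat IH phi_letter ?pushs_reduced //.
rewrite -[sq_letters (x :: u)]/([:: x; x] ++ sq_letters u) !pushs_cat.
by rewrite pushsK // !pushs_reduced.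
Qed.

Lemma phiE u : phi u = pushs a2 (pushs (sq_letters u) (inv_word a2)).
Proof. exact: pushs_phi_word. Qed.

Lemma phi_conj u : reduced u -> pushs (pushs (inv_word a2) (phi u)) a2 = sq_letters u.
Proof.
move=> Hu; rewrite phiE pushsK ?pushs_reduced // pushsA //.
have -> : pushs (inv_word a2) a2 = [::] by [].
exact: reduce_id (sq_letters_reduced Hu).
Qed.

Lemma phi_length_lb u : reduced u -> (size u).*2 <= size (phi u) + 4.
Proof.
move=> Hu; rewrite -size_sq_letters -(phi_conj Hu).
apply: leq_trans (size_pushs _ _) _.
have := size_pushs (inv_word a2) (phi u); rewrite /=; lia.
Qed.

Fixpoint words_upto n : seq (seq letter) :=
  if n is m.+1 then [::] :: [seq x :: w | x <- enum {: letter}, w <- words_upto m]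
  else [:: [::]].

Lemma mem_words_upto n u : size u <= n -> u \in words_upto n.
Proof.
elim: n u => [|n IH] [|x u] //=; rewrite ltnS => Hs.
rewrite in_cons; apply/orP; right.
by apply: (allpairs_f (fun x w => x :: w)); [exact: mem_enum | exact: IH].
Qed.

Theorem mainTheorem7 :
  mono_on_F2 phi /\ almost_strictly_length_increasing phi /\ ~ length_increasing phi.
Proof.
split; [|split].
- move=> u v Hu Hv E; apply: sq_letters_inj.
  by rewrite -(phi_conj Hu) -(phi_conj Hv) E.
- exists (words_upto 4) => u Hu Hle; apply: mem_words_upto.
  have := leq_trans (phi_length_lb Hu) (leq_add Hle (leqnn 4)).
  by rewrite -addnn leq_add2l.
- have phi_witness : phi [:: A_; b_; a_] = [:: b_; b_] by [].
  by move=> /(_ [:: A_; b_; a_] isT); rewrite phi_witness.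
Qed.
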